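(* Let $G$ be a connected graph. Then $G$ is a core if and only if there exists a (possibly infinite) graph $H$ such that $G\to H$ and every homomorphism from $G$ to $H$ is locally injective.
   Context: A homomorphism $G\to H$ is an adjacency-preserving map $V(G)\to V(H)$; $G\to H$ means one exists. A homomorphism $\varphi$ is locally injective if $\varphi(u)\ne\varphi(v)$ for any two distinct vertices $u,v$ having a common neighbor. $G$ is a core if every homomorphism $G\to G$ is an automorphism. *)

(* A finite simple graph G is a finType V with a symmetric,
   irreflexive boolean relation e. A possibly infinite graph H is a Type with a
   symmetric irreflexive Prop-valued adjacency relation. *)
From mathcomp Require Import all_boot.
Set Implicit Arguments. Unset Strict Implicit. Unset Printing Implicit Defensive.

Definition connected_graph (V : finType) (e : rel V) : Prop :=
  forall x y : V, connect e x y.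

Definition is_hom (V : finType) (e : rel V) (H : Type) (adj : H -> H -> Prop)
  (f : V -> H) : Prop :=
  forall u v : V, e u v -> adj (f u) (f v).

Definition locally_injective (V : finType) (e : rel V) (H : Type) (f : V -> H) : Prop :=
  forall u v w : V, e w u -> e w v -> u <> v -> f u <> f v.

Definition is_automorphism (V : finType) (e : rel V) (f : V -> V) : Prop :=
  bijective f /\ forall u v : V, e (f u) (f v) = e u v.

Definition is_core (V : finType) (e : rel V) : Prop :=
  forall f : V -> V, is_hom e (fun x y => e x y) f -> is_automorphism e f.

(* A locally injective endomorphism f of a finite connected graph is an
   automorphism: some power r = f^n is idempotent and still locally injective,
   and a locally injective retraction fixes every neighbour of a fixed point
   (if x = r x ~ z then z and r z are both neighbours of x with the same image),
   so by connectivity r is the identity and f is invertible with inverse the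
   endomorphism f^(n-1).  Hence G is a core as soon as every homomorphism from
   G into some graph H is locally injective, since composing an endomorphism
   with G -> H yields such a homomorphism; conversely a core satisfies this
   with H = G, its endomorphisms being injective. *)
From mathcomp Require Import all_boot.

Set Implicit Arguments.
Unset Strict Implicit.
Unset Printing Implicit Defensive.

Section FunctionPowers.

Variables (T : finType) (f : T -> T).

Lemma iter_eventually_periodic : exists i p, 0 < p /\ iter (i + p) f =1 iter i f.
Proof.
pose step (g : {ffun T -> T}) := [ffun x => f (g x)].
have iter_step k : iter k step [ffun x => x] = [ffun x => iter k f x].
  by elim: k => [|k IHk]; apply/ffunP => x; rewrite /= !ffunE ?IHk ?ffunE.
have /trajectP[i lt_i_ord eq_iter] := looping_order step [ffun x => x].
exists i, (order step [ffun x => x] - i); split; first by rewrite subn_gt0.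
move=> x; rewrite subnKC ?(ltnW lt_i_ord) //.
by move/ffunP: eq_iter => /(_ x); rewrite !iter_step !ffunE.
Qed.

Lemma iter_periodic i p :
  iter (i + p) f =1 iter i f -> forall k m, i <= m -> iter (m + p * k) f =1 iter m f.
Proof.
move=> per k m le_im x.
have shift a : i <= a -> iter (a + p) f x = iter a f x.
  by move=> le_ia; rewrite -(subnK le_ia) -addnA iterD per -iterD.
elim: k => [|k IHk]; first by rewrite muln0 addn0.
by rewrite mulnS addnCA addnC shift ?IHk // (leq_trans le_im) ?leq_addr.
Qed.

Lemma iter_idempotent :
  exists2 n, 0 < n & forall x, iter n f (iter n f x) = iter n f x.
Proof.
have [i [p [p_gt0 per]]] := iter_eventually_periodic.
exists (p * i.+1); first by rewrite muln_gt0 p_gt0.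
move=> x; rewrite -iterD (iter_periodic per) //.
exact: leq_trans (leqnSn i) (leq_pmull _ p_gt0).
Qed.

End FunctionPowers.

Section LocallyInjectiveEndomorphisms.

Variables (V : finType) (e : rel V).

Local Notation is_endo f := (is_hom e (fun x y => e x y) f).

Lemma is_hom_comp (H : Type) (adj : H -> H -> Prop) (f : V -> V) (g : V -> H) :
  is_endo f -> is_hom e adj g -> is_hom e adj (g \o f).
Proof. by move=> hom_f hom_g u v /hom_f /hom_g. Qed.

Lemma locally_injective_of_comp (H : Type) (f : V -> V) (g : V -> H) :
  locally_injective e (g \o f) -> locally_injective e f.
Proof.
move=> li_gf u v w e_wu e_wv neq_uv eq_fuv.
by apply: (li_gf u v w e_wu e_wv neq_uv); rewrite /= eq_fuv.
Qed.

Lemma is_hom_iter (f : V -> V) : is_endo f -> forall n, is_endo (iter n f).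
Proof. by move=> hom_f; elim => [|n IHn] u v //= /IHn /hom_f. Qed.

Lemma locally_injective_iter (f : V -> V) :
  is_endo f -> locally_injective e f -> forall n, locally_injective e (iter n f).
Proof.
move=> hom_f li_f; elim => [|n IHn] u v w e_wu e_wv neq_uv //.
rewrite !iterSr; apply: (IHn _ _ (f w)); try exact: hom_f.
exact: li_f e_wu e_wv neq_uv.
Qed.

Section Retraction.

Variable r : V -> V.
Hypotheses (hom_r : is_endo r) (li_r : locally_injective e r).
Hypothesis r_idem : forall x, r (r x) = r x.

Lemma retraction_fixed_adj x z : e x z -> r x = x -> r z = z.
Proof.
move=> e_xz fix_x; have [//|neq_z] := eqVneq (r z) z; exfalso.
have e_x_rz : e x (r z) by rewrite -[x in e x _]fix_x; exact: hom_r.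
apply: (li_r e_xz e_x_rz); last by rewrite r_idem.
by apply/eqP; rewrite eq_sym.
Qed.

Lemma locally_injective_retraction_id :
  symmetric e -> connected_graph e -> r =1 id.
Proof.
move=> sym_e conn y; apply/eqP.
have fixed_closed : closed e [pred x | r x == x].
  apply: intro_closed; first exact: sym_connect_sym.
  by move=> x z e_xz /eqP /(retraction_fixed_adj e_xz) fix_z; rewrite inE fix_z.
have := closed_connect fixed_closed (conn (r y) y).
by rewrite !inE r_idem eqxx => /esym.
Qed.

End Retraction.

Lemma locally_injective_endo_automorphism (f : V -> V) :
  symmetric e -> connected_graph e -> is_endo f -> locally_injective e f ->
  is_automorphism e f.
Proof.
move=> sym_e conn hom_f li_f.
have [n n_gt0 idem] := iter_idempotent f.
have iter_id := locally_injective_retraction_id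
  (is_hom_iter hom_f n) (locally_injective_iter hom_f li_f (n := n)) idem sym_e conn.
have fK : cancel f (iter n.-1 f) by move=> x; rewrite -iterSr prednK // iter_id.
have Kf : cancel (iter n.-1 f) f by move=> x; rewrite -iterS prednK // iter_id.
split; first exact: Bijective fK Kf.
move=> u v; apply/idP/idP => [/(is_hom_iter hom_f n.-1)|/hom_f //].
by rewrite !fK.
Qed.

End LocallyInjectiveEndomorphisms.

Theorem lemma4p2 (V : finType) (e : rel V) :
  symmetric e -> irreflexive e -> connected_graph e ->
  (is_core e <->
   exists (H : Type) (adj : H -> H -> Prop),
     (forall x y : H, adj x y -> adj y x) /\
     (forall x : H, ~ adj x x) /\
     (exists f : V -> H, is_hom e adj f) /\
     (forall f : V -> H, is_hom e adj f -> locally_injective e f)).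
Proof.
move=> sym_e irr_e conn; split=> [core | [H [adj [_ [_ [[g hom_g] li_homs]]]]] f hom_f].
- exists V, (fun x y => e x y); split; first by move=> x y; rewrite sym_e.
  split; first by move=> x; rewrite irr_e.
  split; first by exists id.
  by move=> f /core [/bij_inj inj_f _] u v w _ _ neq_uv /inj_f.
- apply: locally_injective_endo_automorphism => //.
  apply: (locally_injective_of_comp (g := g)); apply: li_homs.
  exact: is_hom_comp.
Qed.
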